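(* Let $\{e_k\}_{k=1}^\infty$ be the canonical orthonormal basis of the real Hilbert space $\ell_2$, and let $\mathcal{X}=\{x_k\}_{k=1}^\infty\subset\ell_2$ satisfy \[ \sum_{k=1}^\infty\|e_k-x_k\|^2\le\frac18.\] Then $\mathcal{X}$ is not injective.
   Context: A family $\{x_k\}$ in $\ell_2$ is called injective if whenever a Hilbert–Schmidt self-adjoint operator $T$ on $\ell_2$ satisfies $\langle Tx_k,x_k\rangle=0$ for all $k$, then $T=0$. *)

From Stdlib Require Import Reals.
From Coquelicot Require Import Coquelicot.
Open Scope R_scope.

(* Real l2 = square-summable real sequences indexed by nat (index 0 plays the role of 1). *)
Definition l2 (x : nat -> R) : Prop := ex_series (fun n => (x n) ^ 2).

Definition ip (x y : nat -> R) : R := Series (fun n => x n * y n).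
Definition sqnorm (x : nat -> R) : R := Series (fun n => (x n) ^ 2).

Definition e (k : nat) : nat -> R := fun n => if Nat.eqb n k then 1 else 0.

(* A bounded linear operator on l2, represented as a map on sequences whose
   behaviour is only relevant on l2. *)
Definition bounded_linear_op (T : (nat -> R) -> (nat -> R)) : Prop :=
  (forall x, l2 x -> l2 (T x)) /\
  (forall x y a b, l2 x -> l2 y ->
     forall n, T (fun m => a * x m + b * y m) n = a * T x n + b * T y n) /\
  (exists C, forall x, l2 x -> sqnorm (T x) <= C * sqnorm x).

Definition hilbert_schmidt (T : (nat -> R) -> (nat -> R)) : Prop :=
  bounded_linear_op T /\ ex_series (fun k => sqnorm (T (e k))).

Definition self_adjoint (T : (nat -> R) -> (nat -> R)) : Prop :=
  forall x y, l2 x -> l2 y -> ip (T x) y = ip x (T y).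

Definition injective_family (x : nat -> nat -> R) : Prop :=
  forall T, hilbert_schmidt T -> self_adjoint T ->
    (forall k, ip (T (x k)) (x k) = 0) ->
    forall y, l2 y -> forall n, T y n = 0.

From Stdlib Require Import Reals Lra Lia Psatz.
From Coquelicot Require Import Coquelicot.
Open Scope R_scope.

(* Let g_k = e_k - x_k. The matrix M with entries x_k(j)^2 - δ_kj satisfies
   |M_kj|^2 <= 6 |g_k(j)|^2, so its Hilbert-Schmidt norm is at most
   sqrt (6 Σ ||g_k||^2) <= sqrt (3/4) < 1, and the Neumann series for (I + M)^-1
   yields a ∈ ℓ2 with a + M a = b, where b_k = -2 x_k(0) x_k(1).
   The operator T = e_0 ⊗ e_1 + e_1 ⊗ e_0 + diag a is self-adjoint, Hilbert-Schmidt
   and nonzero, while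
   <T x_k, x_k> = 2 x_k(0) x_k(1) + Σ_j a_j x_k(j)^2 = 2 x_k(0) x_k(1) + (a + M a)_k = 0. *)

Lemma sqrt_le_of_le_sqr (x y : R) : 0 <= y -> x <= y ^ 2 -> sqrt x <= y.
Proof. intros y_ge0 le_xy. rewrite <- (sqrt_pow2 y y_ge0). now apply sqrt_le_1_alt. Qed.

Lemma Rabs_le_sqrt (x y : R) : x ^ 2 <= y -> Rabs x <= sqrt y.
Proof.
  intros le_xy. rewrite <- (sqrt_pow2 (Rabs x)) by apply Rabs_pos.
  apply sqrt_le_1_alt. now rewrite pow2_abs.
Qed.

Lemma is_series_iff_sum_f_R0 (a : nat -> R) (l : R) :
  is_series a l <-> is_lim_seq (sum_f_R0 a) l.
Proof. now rewrite is_series_Reals, is_lim_seq_Reals. Qed.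

Lemma ex_series_le_nonneg (a b : nat -> R) :
  (forall n, 0 <= a n <= b n) -> ex_series b -> ex_series a.
Proof.
  intros le_ab ex_b. apply (ex_series_le a b); [|exact ex_b].
  intros n. change (Rabs (a n) <= b n). rewrite Rabs_pos_eq; apply le_ab.
Qed.

Section NonnegSeries.
Variable a : nat -> R.
Hypotheses (a_ge0 : forall n, 0 <= a n) (a_ex : ex_series a).

Lemma sum_f_R0_le_Series N : sum_f_R0 a N <= Series a.
Proof.
  apply (is_lim_seq_incr_compare (sum_f_R0 a)).
  - apply is_series_iff_sum_f_R0, Series_correct, a_ex.
  - intros n. rewrite tech5. specialize (a_ge0 (S n)). lra.
Qed.

Lemma Series_ge_term k : a k <= Series a.
Proof.
  eapply Rle_trans; [|apply (sum_f_R0_le_Series k)].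
  destruct k as [|k]; simpl; [lra|].
  pose proof (cond_pos_sum a k a_ge0). lra.
Qed.

Lemma Series_nonneg : 0 <= Series a.
Proof. eapply Rle_trans; [apply (a_ge0 0%nat) | apply Series_ge_term]. Qed.

End NonnegSeries.

Lemma sum_f_R0_geom_le (r : R) (L : nat) :
  0 <= r < 1 -> sum_f_R0 (fun i => r ^ i) L <= / (1 - r).
Proof.
  intros r_bounds. rewrite <- Series_geom by (rewrite Rabs_pos_eq; lra).
  apply sum_f_R0_le_Series.
  - intros i. apply pow_le. lra.
  - apply ex_series_geom. rewrite Rabs_pos_eq; lra.
Qed.

Lemma sum_f_R0_e_mul k (f : nat -> R) N :
  sum_f_R0 (fun n => e k n * f n) N = if Nat.leb k N then f k else 0.
Proof.
  unfold e. induction N as [|N IH].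
  - destruct k; simpl; ring.
  - rewrite tech5, IH. cbv beta.
    destruct (Nat.leb_spec k N), (Nat.eqb_spec (S N) k), (Nat.leb_spec k (S N));
      try lia; subst; ring.
Qed.

Lemma is_series_e_mul k (f : nat -> R) : is_series (fun n => e k n * f n) (f k).
Proof.
  apply is_series_iff_sum_f_R0.
  apply (is_lim_seq_ext_loc (fun _ => f k)); [|apply is_lim_seq_const].
  exists k. intros N le_kN. rewrite sum_f_R0_e_mul.
  destruct (Nat.leb_spec k N); [reflexivity | lia].
Qed.

Lemma Series_e_mul k (f : nat -> R) : Series (fun n => e k n * f n) = f k.
Proof. apply is_series_unique, is_series_e_mul. Qed.

Lemma ex_series_e_mul k (f : nat -> R) : ex_series (fun n => e k n * f n).
Proof. eexists. apply is_series_e_mul. Qed.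

Lemma e_cases k n : e k n = 0 \/ e k n = 1.
Proof. unfold e. destruct (Nat.eqb n k); auto. Qed.

Lemma e_sqr k n : e k n ^ 2 = e k n.
Proof. destruct (e_cases k n) as [-> | ->]; ring. Qed.

Lemma e_sym k n : e k n = e n k.
Proof. unfold e. now rewrite Nat.eqb_sym. Qed.

Lemma l2_ext (u v : nat -> R) : (forall n, u n = v n) -> l2 u -> l2 v.
Proof. intros uv. apply ex_series_ext. intros n. now rewrite uv. Qed.

Lemma l2_e k : l2 (e k).
Proof.
  apply (ex_series_ext (fun n => e k n * 1)); [|apply ex_series_e_mul].
  intros n. now rewrite Rmult_1_r, e_sqr.
Qed.

Lemma l2_lin (a b : R) (u v : nat -> R) : l2 u -> l2 v -> l2 (fun n => a * u n + b * v n).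
Proof.
  intros u_l2 v_l2.
  apply (ex_series_le_nonneg _ (fun n => 2 * a ^ 2 * u n ^ 2 + 2 * b ^ 2 * v n ^ 2)).
  - intros n. pose proof (pow2_ge_0 (a * u n - b * v n)). split; [apply pow2_ge_0 | nra].
  - apply (ex_series_plus (fun n => 2 * a ^ 2 * u n ^ 2)).
    + exact (ex_series_scal_l (2 * a ^ 2) _ u_l2).
    + exact (ex_series_scal_l (2 * b ^ 2) _ v_l2).
Qed.

Lemma sqnorm_nonneg (u : nat -> R) : l2 u -> 0 <= sqnorm u.
Proof. apply Series_nonneg. intros n. apply pow2_ge_0. Qed.

Lemma sqr_le_sqnorm (u : nat -> R) j : l2 u -> u j ^ 2 <= sqnorm u.
Proof.
  intros u_l2. apply (Series_ge_term (fun n => u n ^ 2)); [|exact u_l2].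
  intros n. apply pow2_ge_0.
Qed.

Lemma ex_series_mul_l2 (u v : nat -> R) : l2 u -> l2 v -> ex_series (fun n => u n * v n).
Proof.
  intros u_l2 v_l2. apply ex_series_Rabs.
  apply (ex_series_le_nonneg _ (fun n => (u n ^ 2 + v n ^ 2) / 2)).
  - intros n. split; [apply Rabs_pos|].
    pose proof (pow2_ge_0 (Rabs (u n) - Rabs (v n))).
    rewrite Rabs_mult. rewrite <- (pow2_abs (u n)), <- (pow2_abs (v n)). nra.
  - apply ex_series_scal_r, (ex_series_plus (fun n => u n ^ 2)); assumption.
Qed.

Lemma sqr_mul_le_sqnorm (u v : nat -> R) n : l2 u -> 0 <= (u n * v n) ^ 2 <= sqnorm u * v n ^ 2.
Proof.
  intros u_l2. rewrite Rpow_mult_distr. split; [apply Rmult_le_pos; apply pow2_ge_0|].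
  apply Rmult_le_compat_r; [apply pow2_ge_0 | now apply sqr_le_sqnorm].
Qed.

Lemma l2_mul (u v : nat -> R) : l2 u -> l2 v -> l2 (fun n => u n * v n).
Proof.
  intros u_l2 v_l2. apply (ex_series_le_nonneg _ (fun n => sqnorm u * v n ^ 2)).
  - intros n. now apply sqr_mul_le_sqnorm.
  - exact (ex_series_scal_l (sqnorm u) _ v_l2).
Qed.

Lemma sqnorm_mul_le (u v : nat -> R) : l2 u -> l2 v ->
  sqnorm (fun n => u n * v n) <= sqnorm u * sqnorm v.
Proof.
  intros u_l2 v_l2. unfold sqnorm at 3. rewrite <- Series_scal_l.
  apply Series_le; [|exact (ex_series_scal_l (sqnorm u) _ v_l2)].
  intros n. now apply sqr_mul_le_sqnorm.
Qed.

Lemma ip_comm (u v : nat -> R) : ip u v = ip v u.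
Proof. apply Series_ext. intros n. ring. Qed.

Lemma sqnorm_add_scal (u v : nat -> R) (t : R) : l2 u -> l2 v ->
  sqnorm (fun n => u n + t * v n) = sqnorm u + 2 * t * ip u v + t ^ 2 * sqnorm v.
Proof.
  intros u_l2 v_l2. unfold sqnorm, ip.
  assert (ex_uv : ex_series (fun n => 2 * t * (u n * v n)))
    by exact (ex_series_scal_l (2 * t) _ (ex_series_mul_l2 u v u_l2 v_l2)).
  assert (ex_vv : ex_series (fun n => t ^ 2 * v n ^ 2))
    by exact (ex_series_scal_l (t ^ 2) _ v_l2).
  rewrite <- (Series_scal_l (2 * t)), <- (Series_scal_l (t ^ 2)).
  rewrite <- (Series_plus _ _ u_l2 ex_uv), <- Series_plus.
  - apply Series_ext. intros n. ring.
  - exact (ex_series_plus _ _ u_l2 ex_uv).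
  - exact ex_vv.
Qed.

Lemma ip_sqr_le (u v : nat -> R) : l2 u -> l2 v -> ip u v ^ 2 <= sqnorm u * sqnorm v.
Proof.
  intros u_l2 v_l2.
  assert (quad_ge0 : forall t, 0 <= sqnorm u + 2 * t * ip u v + t ^ 2 * sqnorm v).
  { intros t. rewrite <- sqnorm_add_scal by assumption.
    apply sqnorm_nonneg. apply (l2_ext (fun n => 1 * u n + t * v n)).
    - intros n. ring.
    - now apply l2_lin. }
  pose proof (sqnorm_nonneg u u_l2). pose proof (sqnorm_nonneg v v_l2).
  set (A := sqnorm u) in *. set (B := ip u v) in *. set (C := sqnorm v) in *.
  destruct (Req_dec C 0) as [C0 | C_neq0].
  - destruct (Req_dec B 0) as [-> | B_neq0]; [nra|].
    specialize (quad_ge0 (- (A + 1) / (2 * B))). rewrite C0 in quad_ge0.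
    replace (2 * (- (A + 1) / (2 * B)) * B) with (- (A + 1)) in quad_ge0
      by (field; assumption).
    lra.
  - specialize (quad_ge0 (- B / C)).
    replace (A + 2 * (- B / C) * B + (- B / C) ^ 2 * C) with ((A * C - B ^ 2) / C) in quad_ge0
      by (field; assumption).
    assert (0 <= A * C - B ^ 2); [|lra].
    apply Rmult_le_reg_r with (/ C); [apply Rinv_0_lt_compat; lra | lra].
Qed.

Definition l2norm (u : nat -> R) : R := sqrt (sqnorm u).

Lemma l2norm_nonneg (u : nat -> R) : 0 <= l2norm u.
Proof. apply sqrt_pos. Qed.

Lemma sqr_l2norm (u : nat -> R) : l2 u -> l2norm u ^ 2 = sqnorm u.
Proof. intros u_l2. apply pow2_sqrt, sqnorm_nonneg, u_l2. Qed.

Lemma l2norm_le_iff (u : nat -> R) (B : R) : l2 u -> 0 <= B ->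
  l2norm u <= B <-> sqnorm u <= B ^ 2.
Proof.
  intros u_l2 B_ge0. rewrite <- (sqr_l2norm u u_l2). split; intros le_uB.
  - apply pow_incr. split; [apply l2norm_nonneg | exact le_uB].
  - apply sqrt_le_of_le_sqr; [exact B_ge0|]. now rewrite <- sqr_l2norm.
Qed.

Lemma Rabs_le_l2norm (u : nat -> R) j : l2 u -> Rabs (u j) <= l2norm u.
Proof. intros u_l2. now apply Rabs_le_sqrt, sqr_le_sqnorm. Qed.

Lemma Rabs_ip_le (u v : nat -> R) : l2 u -> l2 v -> Rabs (ip u v) <= l2norm u * l2norm v.
Proof.
  intros u_l2 v_l2. unfold l2norm.
  rewrite <- sqrt_mult by (apply sqnorm_nonneg; assumption).
  now apply Rabs_le_sqrt, ip_sqr_le.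
Qed.

Lemma l2norm_add_le (u v : nat -> R) : l2 u -> l2 v ->
  l2norm (fun n => u n + v n) <= l2norm u + l2norm v.
Proof.
  intros u_l2 v_l2. pose proof (l2norm_nonneg u). pose proof (l2norm_nonneg v).
  apply sqrt_le_of_le_sqr; [lra|].
  replace (sqnorm (fun n => u n + v n)) with (sqnorm (fun n => u n + 1 * v n))
    by (apply Series_ext; intros n; ring).
  rewrite sqnorm_add_scal, <- !sqr_l2norm by assumption.
  pose proof (Rle_abs (ip u v)). pose proof (Rabs_ip_le u v u_l2 v_l2). nra.
Qed.

Lemma l2_sum_f_R0 (f : nat -> nat -> R) (L : nat) : (forall i, l2 (f i)) ->
  l2 (fun j => sum_f_R0 (fun i => f i j) L) /\
  l2norm (fun j => sum_f_R0 (fun i => f i j) L) <= sum_f_R0 (fun i => l2norm (f i)) L.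
Proof.
  intros f_l2.
  induction L as [|L [IH_l2 IH_norm]]; [split; [exact (f_l2 0%nat) | apply Rle_refl]|].
  assert (sum_l2 : l2 (fun j => sum_f_R0 (fun i => f i j) L + f (S L) j)).
  { apply (l2_ext (fun j => 1 * sum_f_R0 (fun i => f i j) L + 1 * f (S L) j)).
    - intros j. ring.
    - now apply l2_lin. }
  simpl sum_f_R0. split; [exact sum_l2|].
  eapply Rle_trans; [apply l2norm_add_le; [exact IH_l2 | apply f_l2]|]. lra.
Qed.

Lemma is_lim_seq_sqr (u : nat -> R) (l : R) :
  is_lim_seq u l -> is_lim_seq (fun n => u n ^ 2) (l ^ 2).
Proof.
  intros u_lim. rewrite <- Rsqr_pow2.
  apply (is_lim_seq_ext (fun n => u n * u n)); [intros n; now rewrite <- Rsqr_pow2|].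
  now apply is_lim_seq_mult'.
Qed.

Lemma l2_pointwise_limit (w : nat -> nat -> R) (u : nat -> R) (B : R) :
  (forall L, l2 (w L)) -> (forall L, l2norm (w L) <= B) ->
  (forall j, is_lim_seq (fun L => w L j) (u j)) -> l2 u /\ l2norm u <= B.
Proof.
  intros w_l2 w_le w_lim.
  assert (B_ge0 : 0 <= B) by (eapply Rle_trans; [apply l2norm_nonneg | apply (w_le 0%nat)]).
  assert (partial_lim : forall N, is_lim_seq (fun L => sum_f_R0 (fun j => w L j ^ 2) N)
                                             (sum_f_R0 (fun j => u j ^ 2) N)).
  { induction N as [|N IH]; simpl;
      [|apply is_lim_seq_plus'; [exact IH|]]; apply is_lim_seq_sqr, w_lim. }
  assert (partial_le : forall N, sum_f_R0 (fun j => u j ^ 2) N <= B ^ 2).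
  { intros N.
    refine (is_lim_seq_le _ (fun _ => B ^ 2) _ (B ^ 2) _ (partial_lim N) (is_lim_seq_const _)).
    intros L. eapply Rle_trans; [apply (sum_f_R0_le_Series (fun j => w L j ^ 2))|].
    - intros j. apply pow2_ge_0.
    - apply w_l2.
    - apply l2norm_le_iff; auto. }
  destruct (ex_finite_lim_seq_incr (sum_f_R0 (fun j => u j ^ 2)) (B ^ 2)) as [s s_lim].
  - intros n. rewrite tech5. pose proof (pow2_ge_0 (u (S n))). lra.
  - exact partial_le.
  - apply is_series_iff_sum_f_R0 in s_lim.
    assert (u_l2 : l2 u) by (exists s; exact s_lim).
    split; [exact u_l2|]. apply l2norm_le_iff; [exact u_l2 | exact B_ge0|].
    unfold sqnorm. rewrite (is_series_unique _ _ s_lim).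
    apply is_series_iff_sum_f_R0 in s_lim.
    exact (is_lim_seq_le _ (fun _ => B ^ 2) s (B ^ 2) partial_le s_lim (is_lim_seq_const _)).
Qed.

Lemma l2_opp (u : nat -> R) : l2 u -> l2 (fun n => - u n).
Proof.
  intros u_l2. apply (ex_series_ext (fun n => u n ^ 2)); [|exact u_l2].
  intros n. change (u n ^ 2 = (- u n) ^ 2). ring.
Qed.

Lemma l2norm_opp (u : nat -> R) : l2norm (fun n => - u n) = l2norm u.
Proof. unfold l2norm, sqnorm. f_equal. apply Series_ext. intros n. ring. Qed.

Lemma is_lim_seq_geom_bound (x : nat -> R) (l c r : R) : 0 <= r < 1 ->
  (forall L, Rabs (x L - l) <= c * r ^ L) -> is_lim_seq x l.
Proof.
  intros r_bounds x_near.
  assert (bound_lim : is_lim_seq (fun L => c * r ^ L) 0).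
  { replace 0 with (c * 0) by ring.
    apply is_lim_seq_mult'; [apply is_lim_seq_const|].
    apply is_lim_seq_geom. rewrite Rabs_pos_eq; lra. }
  apply (is_lim_seq_le_le (fun L => l - c * r ^ L) _ (fun L => l + c * r ^ L)).
  - intros L. specialize (x_near L). apply Rabs_le_between' in x_near. lra.
  - replace (Finite l) with (Finite (l - 0)) by (f_equal; ring).
    apply is_lim_seq_minus'; [apply is_lim_seq_const | exact bound_lim].
  - replace (Finite l) with (Finite (l + 0)) by (f_equal; ring).
    apply is_lim_seq_plus'; [apply is_lim_seq_const | exact bound_lim].
Qed.

Section GeometricFamily.
Variables (f : nat -> nat -> R) (c r : R).
Hypotheses (f_l2 : forall i, l2 (f i)) (f_norm : forall i, l2norm (f i) <= c * r ^ i)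
  (r_ge0 : 0 <= r) (r_lt1 : r < 1).

Lemma geom_family_ex_series j : ex_series (fun i => f i j).
Proof.
  apply ex_series_Rabs, (ex_series_le_nonneg _ (fun i => c * r ^ i)).
  - intros i. split; [apply Rabs_pos|].
    eapply Rle_trans; [apply Rabs_le_l2norm, f_l2 | apply f_norm].
  - apply (ex_series_scal_l c (fun i => r ^ i)), ex_series_geom. rewrite Rabs_pos_eq; lra.
Qed.

Lemma geom_family_partial_sum L :
  l2 (fun j => sum_f_R0 (fun i => f i j) L) /\
  l2norm (fun j => sum_f_R0 (fun i => f i j) L) <= c / (1 - r).
Proof.
  destruct (l2_sum_f_R0 f L f_l2) as [sum_l2 sum_le]. split; [exact sum_l2|].
  assert (c_ge0 : 0 <= c).
  { pose proof (f_norm 0%nat). pose proof (l2norm_nonneg (f 0%nat)). simpl in *. lra. }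
  eapply Rle_trans; [exact sum_le|].
  eapply Rle_trans; [apply (sum_Rle _ (fun i => r ^ i * c)); intros i _;
                     rewrite Rmult_comm; apply f_norm|].
  rewrite <- scal_sum. apply Rmult_le_compat_l; [exact c_ge0|]. now apply sum_f_R0_geom_le.
Qed.

Lemma geom_family_sum (u : nat -> R) : (forall j, is_series (fun i => f i j) (u j)) ->
  l2 u /\ l2norm u <= c / (1 - r).
Proof.
  intros u_sum. apply (l2_pointwise_limit (fun L j => sum_f_R0 (fun i => f i j) L)).
  - intros L. apply geom_family_partial_sum.
  - intros L. apply geom_family_partial_sum.
  - intros j. apply is_series_iff_sum_f_R0, u_sum.
Qed.

End GeometricFamily.

Definition hs_apply (m : nat -> nat -> R) (v : nat -> R) (k : nat) : R := ip (m k) v.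

Definition hs_norm (m : nat -> nat -> R) : R := sqrt (Series (fun k => sqnorm (m k))).

Lemma hs_norm_nonneg (m : nat -> nat -> R) : 0 <= hs_norm m.
Proof. apply sqrt_pos. Qed.

Section HilbertSchmidtMatrix.
Variable m : nat -> nat -> R.
Hypotheses (m_l2 : forall k, l2 (m k)) (m_hs : ex_series (fun k => sqnorm (m k))).

Lemma hs_apply_l2 (v : nat -> R) : l2 v ->
  l2 (hs_apply m v) /\ l2norm (hs_apply m v) <= hs_norm m * l2norm v.
Proof.
  intros v_l2.
  assert (coord_le : forall k, 0 <= hs_apply m v k ^ 2 <= sqnorm (m k) * sqnorm v)
    by (intros k; split; [apply pow2_ge_0 | now apply ip_sqr_le]).
  assert (Mv_l2 : l2 (hs_apply m v))
    by exact (ex_series_le_nonneg _ _ coord_le (ex_series_scal_r _ _ m_hs)).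
  split; [exact Mv_l2|].
  apply l2norm_le_iff; [exact Mv_l2 | apply Rmult_le_pos; apply sqrt_pos|].
  unfold hs_norm. rewrite Rpow_mult_distr, (sqr_l2norm v v_l2), pow2_sqrt
    by (apply Series_nonneg; [intros k; apply sqnorm_nonneg, m_l2 | exact m_hs]).
  rewrite <- Series_scal_r. exact (Series_le _ _ coord_le (ex_series_scal_r _ _ m_hs)).
Qed.

Lemma hs_apply_minus (v w : nat -> R) k : l2 v -> l2 w ->
  hs_apply m (fun j => v j - w j) k = hs_apply m v k - hs_apply m w k.
Proof.
  intros v_l2 w_l2. unfold hs_apply, ip.
  rewrite <- Series_minus by (apply ex_series_mul_l2; auto).
  apply Series_ext. intros n. ring.
Qed.

Lemma hs_apply_sum_f_R0 (f : nat -> nat -> R) L k : (forall i, l2 (f i)) ->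
  hs_apply m (fun j => sum_f_R0 (fun i => f i j) L) k =
  sum_f_R0 (fun i => hs_apply m (f i) k) L.
Proof.
  intros f_l2. induction L as [|L IH]; [reflexivity|].
  simpl sum_f_R0. rewrite <- IH. unfold hs_apply, ip.
  rewrite <- Series_plus by (apply ex_series_mul_l2;
    [apply m_l2 | first [exact (proj1 (l2_sum_f_R0 f L f_l2)) | apply f_l2]]).
  apply Series_ext. intros n. ring.
Qed.

End HilbertSchmidtMatrix.

Fixpoint neumann_term (m : nat -> nat -> R) (b : nat -> R) (i : nat) : nat -> R :=
  match i with
  | O => b
  | S i => fun k => - hs_apply m (neumann_term m b i) k
  end.

Section NeumannSeries.
Variables (m : nat -> nat -> R) (b : nat -> R).
Hypotheses (m_l2 : forall k, l2 (m k)) (m_hs : ex_series (fun k => sqnorm (m k)))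
  (m_contraction : hs_norm m < 1) (b_l2 : l2 b).

Lemma neumann_term_l2 i :
  l2 (neumann_term m b i) /\ l2norm (neumann_term m b i) <= l2norm b * hs_norm m ^ i.
Proof.
  induction i as [|i [IH_l2 IH_norm]]; simpl; [split; [exact b_l2 | lra]|].
  destruct (hs_apply_l2 m m_l2 m_hs _ IH_l2) as [M_l2 M_norm].
  split; [now apply l2_opp|]. rewrite l2norm_opp.
  eapply Rle_trans; [exact M_norm|].
  pose proof (hs_norm_nonneg m). apply (Rmult_le_compat_l (hs_norm m)) in IH_norm; lra.
Qed.

Let ratio_bounds : 0 <= hs_norm m < 1.
Proof. split; [apply hs_norm_nonneg | exact m_contraction]. Qed.

Lemma neumann_term_ex_series j : ex_series (fun i => neumann_term m b i j).
Proof.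
  apply (geom_family_ex_series _ (l2norm b) (hs_norm m)); try apply ratio_bounds;
    intros i; apply neumann_term_l2.
Qed.

Let sol j := Series (fun i => neumann_term m b i j).
Let partial L j := sum_f_R0 (fun i => neumann_term m b i j) L.

Lemma neumann_tail_le L : l2 (fun j => sol j - partial L j) /\
  l2norm (fun j => sol j - partial L j) <= l2norm b * hs_norm m ^ S L / (1 - hs_norm m).
Proof.
  apply (geom_family_sum (fun i => neumann_term m b (S L + i))); try apply ratio_bounds.
  - intros i. apply neumann_term_l2.
  - intros i. rewrite Rmult_assoc, <- pow_add. apply neumann_term_l2.
  - intros j. unfold sol, partial.
    rewrite (Series_incr_n _ (S L)) by (lia || apply neumann_term_ex_series).
    replace (_ + _ - _) with (Series (fun i => neumann_term m b (S L + i) j)) by (simpl; ring).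
    apply Series_correct, (ex_series_incr_n (fun i => neumann_term m b i j)).
    apply neumann_term_ex_series.
Qed.

Lemma neumann_partial_succ L k :
  sum_f_R0 (fun i => neumann_term m b (S i) k) L = - hs_apply m (partial L) k.
Proof.
  unfold partial. rewrite hs_apply_sum_f_R0 by (auto; intros i; apply neumann_term_l2).
  set (apply_sum := sum_f_R0 _ L) at 2.
  replace (- apply_sum) with (-1 * apply_sum) by ring. unfold apply_sum.
  rewrite scal_sum. apply sum_eq. intros i _. simpl. ring.
Qed.

Lemma neumann_sum_l2 : l2 sol.
Proof.
  apply (geom_family_sum (neumann_term m b) (l2norm b) (hs_norm m)); try apply ratio_bounds.
  - intros i. apply neumann_term_l2.
  - intros i. apply neumann_term_l2.
  - intros j. apply Series_correct, neumann_term_ex_series.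
Qed.

Lemma neumann_apply_partial_cvg k :
  is_lim_seq (fun L => hs_apply m (partial L) k) (hs_apply m sol k).
Proof.
  apply (is_lim_seq_geom_bound _ _
    (l2norm (m k) * (l2norm b * hs_norm m / (1 - hs_norm m))) (hs_norm m) ratio_bounds).
  intros L. destruct (neumann_tail_le L) as [tail_l2 tail_norm].
  assert (partial_l2 : l2 (partial L)).
  { apply (geom_family_partial_sum _ (l2norm b) (hs_norm m)); try apply ratio_bounds;
      intros i; apply neumann_term_l2. }
  pose proof neumann_sum_l2 as sol_l2.
  rewrite <- Rabs_Ropp, Ropp_minus_distr, <- hs_apply_minus by auto.
  eapply Rle_trans; [apply Rabs_ip_le; auto|].
  rewrite Rmult_assoc. apply Rmult_le_compat_l; [apply l2norm_nonneg|].
  eapply Rle_trans; [exact tail_norm|]. right. simpl. field. lra.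
Qed.

Theorem hs_neumann_solution : exists a, l2 a /\ forall k, a k + hs_apply m a k = b k.
Proof.
  exists sol. split; [exact neumann_sum_l2|]. intros k.
  assert (succ_lim : is_lim_seq (fun L => sum_f_R0 (fun i => neumann_term m b (S i) k) L)
                                (sol k - b k)).
  { apply is_series_iff_sum_f_R0. unfold sol.
    rewrite Series_incr_1 by apply neumann_term_ex_series.
    replace (_ + _ - _) with (Series (fun i => neumann_term m b (S i) k)) by (simpl; ring).
    apply Series_correct, (ex_series_incr_1 (fun i => neumann_term m b i k)).
    apply neumann_term_ex_series. }
  assert (apply_lim := proj1 (is_lim_seq_opp _ _) (neumann_apply_partial_cvg k)).
  apply (is_lim_seq_ext _ _ _ (fun L => eq_sym (neumann_partial_succ L k))) in apply_lim.
  assert (same_lim : Finite (sol k - b k) = Rbar_opp (hs_apply m sol k)).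
  { rewrite <- (is_lim_seq_unique _ _ succ_lim). exact (is_lim_seq_unique _ _ apply_lim). }
  injection same_lim. lra.
Qed.

End NeumannSeries.

Definition flip_plus_diag (a : nat -> R) (y : nat -> R) (n : nat) : R :=
  e 0 n * y 1%nat + e 1 n * y 0%nat + a n * y n.

Lemma flip_plus_diag_e0 (a : nat -> R) : flip_plus_diag a (e 0) 1 = 1.
Proof. unfold flip_plus_diag, e. simpl. ring. Qed.

Lemma sqr_add3_le (u v w : R) : (u + v + w) ^ 2 <= 3 * (u ^ 2 + v ^ 2 + w ^ 2).
Proof.
  pose proof (pow2_ge_0 (u - v)). pose proof (pow2_ge_0 (u - w)). pose proof (pow2_ge_0 (v - w)).
  nra.
Qed.

Section FlipPlusDiag.
Variable a : nat -> R.
Hypothesis a_l2 : l2 a.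

Lemma flip_plus_diag_sqnorm_le (y : nat -> R) : l2 y ->
  l2 (flip_plus_diag a y) /\
  sqnorm (flip_plus_diag a y) <= 3 * (y 1%nat ^ 2 + y 0%nat ^ 2 + sqnorm (fun n => a n * y n)).
Proof.
  intros y_l2.
  set (bound n := 3 * (e 0 n * y 1%nat ^ 2 + e 1 n * y 0%nat ^ 2 + (a n * y n) ^ 2)).
  assert (le_bound : forall n, 0 <= flip_plus_diag a y n ^ 2 <= bound n).
  { intros n. split; [apply pow2_ge_0|]. unfold flip_plus_diag, bound.
    replace (e 0 n * y 1%nat ^ 2) with ((e 0 n * y 1%nat) ^ 2)
      by now rewrite Rpow_mult_distr, e_sqr.
    replace (e 1 n * y 0%nat ^ 2) with ((e 1 n * y 0%nat) ^ 2)
      by now rewrite Rpow_mult_distr, e_sqr.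
    apply sqr_add3_le. }
  assert (ex_e0 := ex_series_e_mul 0 (fun _ => y 1%nat ^ 2)).
  assert (ex_e1 := ex_series_e_mul 1 (fun _ => y 0%nat ^ 2)).
  assert (ex_e01 : ex_series (fun n => e 0 n * y 1%nat ^ 2 + e 1 n * y 0%nat ^ 2))
    by exact (ex_series_plus _ _ ex_e0 ex_e1).
  assert (ex_ay := l2_mul a y a_l2 y_l2).
  assert (ex_bound : ex_series bound)
    by exact (ex_series_scal_l 3 _ (ex_series_plus _ _ ex_e01 ex_ay)).
  split; [exact (ex_series_le_nonneg _ _ le_bound ex_bound)|].
  eapply Rle_trans; [exact (Series_le _ _ le_bound ex_bound)|]. right.
  unfold bound.
  rewrite Series_scal_l, (Series_plus _ _ ex_e01 ex_ay), (Series_plus _ _ ex_e0 ex_e1).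
  now rewrite !Series_e_mul.
Qed.

Lemma flip_plus_diag_bounded : bounded_linear_op (flip_plus_diag a).
Proof.
  split; [|split].
  - intros y y_l2. now apply flip_plus_diag_sqnorm_le.
  - intros y z s t _ _ n. unfold flip_plus_diag. ring.
  - exists (6 + 3 * sqnorm a). intros y y_l2.
    eapply Rle_trans; [now apply flip_plus_diag_sqnorm_le|].
    pose proof (sqr_le_sqnorm y 0 y_l2). pose proof (sqr_le_sqnorm y 1 y_l2).
    pose proof (sqnorm_mul_le a y a_l2 y_l2). lra.
Qed.

Lemma flip_plus_diag_hilbert_schmidt : hilbert_schmidt (flip_plus_diag a).
Proof.
  split; [exact flip_plus_diag_bounded|].
  apply (ex_series_le_nonneg _ (fun k => 3 * (e 1 k * 1 + e 0 k * 1 + a k ^ 2))).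
  - intros k. split; [apply sqnorm_nonneg, flip_plus_diag_sqnorm_le, l2_e|].
    eapply Rle_trans; [apply flip_plus_diag_sqnorm_le, l2_e|].
    replace (sqnorm (fun n => a n * e k n)) with (a k ^ 2).
    + rewrite !e_sqr, (e_sym k 1), (e_sym k 0). lra.
    + rewrite <- (Series_e_mul k (fun n => a n ^ 2)). apply Series_ext. intros n.
      now rewrite Rpow_mult_distr, e_sqr, Rmult_comm.
  - apply (ex_series_scal_l 3 (fun k => e 1 k * 1 + e 0 k * 1 + a k ^ 2)).
    apply (ex_series_plus (fun k => e 1 k * 1 + e 0 k * 1)); [|exact a_l2].
    exact (ex_series_plus _ _ (ex_series_e_mul 1 _) (ex_series_e_mul 0 _)).
Qed.

Lemma flip_plus_diag_ip (y z : nat -> R) : l2 y -> l2 z ->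
  ip (flip_plus_diag a y) z =
  y 1%nat * z 0%nat + y 0%nat * z 1%nat + ip (fun n => a n * y n) z.
Proof.
  intros y_l2 z_l2. unfold ip at 1, flip_plus_diag.
  assert (ex_e0 := ex_series_e_mul 0 (fun n => y 1%nat * z n)).
  assert (ex_e1 := ex_series_e_mul 1 (fun n => y 0%nat * z n)).
  assert (ex_ayz := ex_series_mul_l2 _ _ (l2_mul a y a_l2 y_l2) z_l2).
  rewrite (Series_ext _ (fun n => e 0 n * (y 1%nat * z n) + e 1 n * (y 0%nat * z n)
                                 + a n * y n * z n)) by (intros n; ring).
  assert (ex_e01 : ex_series (fun n => e 0 n * (y 1%nat * z n) + e 1 n * (y 0%nat * z n)))
    by exact (ex_series_plus _ _ ex_e0 ex_e1).
  rewrite (Series_plus _ _ ex_e01 ex_ayz), (Series_plus _ _ ex_e0 ex_e1).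
  now rewrite !Series_e_mul.
Qed.

Lemma flip_plus_diag_self_adjoint : self_adjoint (flip_plus_diag a).
Proof.
  intros y z y_l2 z_l2.
  rewrite (ip_comm y), !flip_plus_diag_ip by assumption.
  replace (ip (fun n => a n * z n) y) with (ip (fun n => a n * y n) z)
    by (apply Series_ext; intros n; ring).
  ring.
Qed.

End FlipPlusDiag.

Lemma near_unit_sqr_le (d t : R) : (d = 0 \/ d = 1) -> t ^ 2 <= 1 / 8 -> (d - t) ^ 2 <= 2.
Proof. intros [-> | ->] t_small; nra. Qed.

Lemma near_unit_sqr_sub_le (d t : R) : (d = 0 \/ d = 1) -> t ^ 2 <= 1 / 8 ->
  ((d - t) ^ 2 - d) ^ 2 <= 6 * t ^ 2.
Proof.
  intros [-> | ->] t_small.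
  - pose proof (pow2_ge_0 t). nra.
  - assert (t_bounds : -2/5 < t < 2/5) by (split; nra).
    replace (((1 - t) ^ 2 - 1) ^ 2) with (t ^ 2 * (t - 2) ^ 2) by ring.
    rewrite (Rmult_comm 6). apply Rmult_le_compat_l; [apply pow2_ge_0 | nra].
Qed.

Section NearlyOrthonormal.
Variable x : nat -> nat -> R.
Hypotheses (x_l2 : forall k, l2 (x k))
  (dev_hs : ex_series (fun k => sqnorm (fun n => e k n - x k n)))
  (dev_small : Series (fun k => sqnorm (fun n => e k n - x k n)) <= 1 / 8).

Lemma dev_l2 k : l2 (fun n => e k n - x k n).
Proof.
  apply (l2_ext (fun n => 1 * e k n + -1 * x k n)); [intros n; ring|].
  apply l2_lin; [apply l2_e | apply x_l2].
Qed.

Lemma dev_sqnorm_le k : sqnorm (fun n => e k n - x k n) <= 1 / 8.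
Proof.
  eapply Rle_trans; [|exact dev_small].
  apply (Series_ge_term (fun k => sqnorm (fun n => e k n - x k n))); [|exact dev_hs].
  intros i. apply sqnorm_nonneg, dev_l2.
Qed.

Lemma dev_coord_sqr_le k n : (e k n - x k n) ^ 2 <= 1 / 8.
Proof.
  eapply Rle_trans; [exact (sqr_le_sqnorm (fun n => e k n - x k n) n (dev_l2 k)) |].
  apply dev_sqnorm_le.
Qed.

Lemma coord_sqr_le k n : x k n ^ 2 <= 2.
Proof.
  replace (x k n) with (e k n - (e k n - x k n)) by ring.
  apply near_unit_sqr_le; [apply e_cases | apply dev_coord_sqr_le].
Qed.

Lemma off_diag_sqr_le k n : n <> k -> x k n ^ 2 <= sqnorm (fun n => e k n - x k n).
Proof.
  intros n_neq_k. replace (x k n) with (- (e k n - x k n)).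
  - rewrite <- Rsqr_pow2, <- Rsqr_neg, Rsqr_pow2.
    exact (sqr_le_sqnorm (fun n => e k n - x k n) n (dev_l2 k)).
  - unfold e. apply Nat.eqb_neq in n_neq_k. rewrite n_neq_k. ring.
Qed.

Definition sqr_dev_matrix (k j : nat) : R := x k j ^ 2 - e k j.

Lemma sqr_dev_matrix_sqr_le k j : sqr_dev_matrix k j ^ 2 <= 6 * (e k j - x k j) ^ 2.
Proof.
  unfold sqr_dev_matrix. replace (x k j) with (e k j - (e k j - x k j)) at 1 by ring.
  apply near_unit_sqr_sub_le; [apply e_cases | apply dev_coord_sqr_le].
Qed.

Lemma sqr_dev_matrix_l2 k : l2 (sqr_dev_matrix k).
Proof.
  apply (ex_series_le_nonneg _ (fun j => 6 * (e k j - x k j) ^ 2)).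
  - intros j. split; [apply pow2_ge_0 | apply sqr_dev_matrix_sqr_le].
  - exact (ex_series_scal_l 6 _ (dev_l2 k)).
Qed.

Lemma sqr_dev_matrix_sqnorm_le k :
  sqnorm (sqr_dev_matrix k) <= 6 * sqnorm (fun n => e k n - x k n).
Proof.
  unfold sqnorm at 2. rewrite <- Series_scal_l.
  apply Series_le; [|exact (ex_series_scal_l 6 _ (dev_l2 k))].
  intros j. split; [apply pow2_ge_0 | apply sqr_dev_matrix_sqr_le].
Qed.

Lemma sqr_dev_matrix_hs : ex_series (fun k => sqnorm (sqr_dev_matrix k)).
Proof.
  apply (ex_series_le_nonneg _ (fun k => 6 * sqnorm (fun n => e k n - x k n))).
  - intros k. split; [apply sqnorm_nonneg, sqr_dev_matrix_l2 | apply sqr_dev_matrix_sqnorm_le].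
  - exact (ex_series_scal_l 6 _ dev_hs).
Qed.

Lemma sqr_dev_matrix_contraction : hs_norm sqr_dev_matrix < 1.
Proof.
  unfold hs_norm. rewrite <- sqrt_1. apply sqrt_lt_1_alt. split.
  - apply Series_nonneg; [|exact sqr_dev_matrix_hs].
    intros k. apply sqnorm_nonneg, sqr_dev_matrix_l2.
  - eapply Rle_lt_trans.
    + apply Series_le; [|exact (ex_series_scal_l 6 _ dev_hs)].
      intros k. split; [apply sqnorm_nonneg, sqr_dev_matrix_l2 | apply sqr_dev_matrix_sqnorm_le].
    + rewrite Series_scal_l. lra.
Qed.

Definition cross_term (k : nat) : R := -2 * (x k 0%nat * x k 1%nat).

Lemma cross_term_l2 : l2 cross_term.
Proof.
  apply (ex_series_le_nonneg _ (fun k => 8 * sqnorm (fun n => e k n - x k n)));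
    [|exact (ex_series_scal_l 8 _ dev_hs)].
  intros k. split; [apply pow2_ge_0|]. unfold cross_term.
  replace ((-2 * (x k 0%nat * x k 1%nat)) ^ 2) with (4 * (x k 0%nat ^ 2 * x k 1%nat ^ 2))
    by ring.
  pose proof (pow2_ge_0 (x k 0%nat)). pose proof (pow2_ge_0 (x k 1%nat)).
  destruct (Nat.eq_dec k 0) as [-> | k_neq0].
  - pose proof (coord_sqr_le 0 0). pose proof (off_diag_sqr_le 0 1 ltac:(lia)). nra.
  - pose proof (coord_sqr_le k 1). pose proof (off_diag_sqr_le k 0 ltac:(lia)). nra.
Qed.

Lemma flip_plus_diag_quad_vanishes (a : nat -> R) : l2 a ->
  (forall k, a k + hs_apply sqr_dev_matrix a k = cross_term k) ->
  forall k, ip (flip_plus_diag a (x k)) (x k) = 0.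
Proof.
  intros a_l2 a_solves k.
  rewrite flip_plus_diag_ip by auto.
  replace (ip (fun n => a n * x k n) (x k)) with (a k + hs_apply sqr_dev_matrix a k).
  - rewrite a_solves. unfold cross_term. ring.
  - unfold hs_apply, ip. rewrite <- (Series_e_mul k a), <- Series_plus.
    + apply Series_ext. intros n. unfold sqr_dev_matrix. ring.
    + apply ex_series_e_mul.
    + apply ex_series_mul_l2; [apply sqr_dev_matrix_l2 | exact a_l2].
Qed.

End NearlyOrthonormal.

Theorem mainTheorem16 (x : nat -> nat -> R) :
  (forall k, l2 (x k)) ->
  ex_series (fun k => sqnorm (fun n => e k n - x k n)) ->
  Series (fun k => sqnorm (fun n => e k n - x k n)) <= 1 / 8 ->
  ~ injective_family x.
Proof.
  intros x_l2 dev_hs dev_small x_injective.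
  destruct (hs_neumann_solution (sqr_dev_matrix x) (cross_term x)) as [a [a_l2 a_solves]].
  - now apply sqr_dev_matrix_l2.
  - now apply sqr_dev_matrix_hs.
  - now apply sqr_dev_matrix_contraction.
  - now apply cross_term_l2.
  - assert (T_vanishes := x_injective (flip_plus_diag a)
      (flip_plus_diag_hilbert_schmidt a a_l2) (flip_plus_diag_self_adjoint a a_l2)
      (flip_plus_diag_quad_vanishes x x_l2 dev_hs dev_small a a_l2 a_solves)
      (e 0) (l2_e 0) 1%nat).
    rewrite flip_plus_diag_e0 in T_vanishes. lra.
Qed.
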